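(* For every forest $T$ on $n \geq 1$ vertices, $pdim(T) \leq 1.441 \log_2 n + 3$.
   Context: For a graph $G=(V,E)$ and $l\in\mathbb{N}$, an $l$-encoding of $G$ is an injective function $\phi: V\to\mathbb{N}^l$ such that for all $u,v\in V$, $\{u,v\}\in E$ if and only if $\phi(u)$ and $\phi(v)$ differ in all $l$ coordinates. The product dimension $pdim(G)$ is the minimum $l$ such that an $l$-encoding of $G$ exists (equivalently, the minimum $l$ such that $G$ is an induced subgraph of a direct product of $l$ complete graphs). *)

From mathcomp Require Import all_boot.
From Stdlib Require Import Reals.
Set Implicit Arguments. Unset Strict Implicit. Unset Printing Implicit Defensive.

Definition simple_graph (T : finType) (e : rel T) : Prop :=
  symmetric e /\ irreflexive e.

Definition has_cycle (T : finType) (e : rel T) : Prop :=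
  exists (x : T) (s : seq T),
    [/\ 2 <= size s, uniq (x :: s), path e x s & e (last x s) x].

Definition forest (T : finType) (e : rel T) : Prop :=
  simple_graph e /\ ~ has_cycle e.

Definition encoding (T : finType) (e : rel T) (l : nat)
    (phi : T -> {ffun 'I_l -> nat}) : Prop :=
  injective phi /\
  forall u v : T, e u v <-> (forall i : 'I_l, phi u i <> phi v i).

Definition has_encoding (T : finType) (e : rel T) (l : nat) : Prop :=
  exists phi : T -> {ffun 'I_l -> nat}, @encoding T e l phi.

Definition log2 (x : R) : R := (ln x / ln 2)%R.

From mathcomp Require Import all_boot zify.
From Stdlib Require Import Reals Lra.
Set Implicit Arguments. Unset Strict Implicit. Unset Printing Implicit Defensive.

(* The encoding of a forest T with d+2 coordinates is built from a
   "d-separating scheme" on its vertex set: a proper 2-colouring col plus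
   coordinate functions cs i, each a proper colouring, such that any two
   distinct non-adjacent vertices of different colours agree in some cs i
   with i < d.  Coordinate 0 of the encoding is an injective label, coordinate
   1 the colour, coordinates 2..d+1 are cs 0 .. cs (d-1).

   Schemes glue: if S = A u B with A n B = {v} and no edges between A \ B and
   B \ A, schemes of depth d on A and B (relabelled to agree at v) give a
   scheme of depth d+1 on S, the extra coordinate separating the two sides.
   In a forest one cuts at a centroid v (every component of S \ v has at most
   |S|/2 vertices) and distributes the components into at most three groups;
   gluing the pieces shows by induction that every vertex set of size at most
   fib (d+1) has a d-separating scheme, where fib = 1, 2, 3, 5, 8, ....
   Finally fib d >= 1.618^d and 85 log2 1.618 >= 59 turn the minimal such d
   into the bound 1.441 log2 n. *)

Section Separation.
Variables (T : finType) (e : rel T).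
Hypotheses (e_sym : symmetric e) (e_irr : irreflexive e).
Implicit Types (S U G A B : {set T}) (d : nat).

Definition separates (S : {set T}) (d : nat) (col : T -> bool)
    (cs : nat -> T -> nat) : Prop :=
  [/\ {in S &, forall u w, e u w -> col u != col w},
      forall i, {in S &, forall u w, e u w -> cs i u != cs i w} &
      {in S &, forall u w, u != w -> ~~ e u w -> col u != col w ->
         exists2 i, i < d & cs i u = cs i w}].

Definition separable (S : {set T}) (d : nat) : Prop :=
  exists col cs, separates S d col cs.

Lemma separable_mono S d d' : d <= d' -> separable S d -> separable S d'.
Proof.
move=> le_dd' [col [cs [pcol pcs sep]]]; exists col, cs; split=> // u w uS wS uw nuw cuw.
by have [i lt_id eq_i] := sep u w uS wS uw nuw cuw; exists i; first exact: leq_trans le_dd'.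
Qed.

(* An injective label, the colour and the d separating coordinates encode the
   whole graph: adjacent vertices differ everywhere by properness, and
   non-adjacent ones agree in the label, the colour or some cs i. *)
Lemma encoding_of_separable d : separable [set: T] d -> has_encoding e d.+2.
Proof.
move=> [col [cs [pcol pcs sep]]].
pose phi u : {ffun 'I_d.+2 -> nat} := [ffun i =>
  match val i with 0 => pickle u | 1 => nat_of_bool (col u) | j.+2 => cs j u end].
have pickle_inj : injective (@pickle T) := pcan_inj (@pickleK T).
exists phi; split=> [u w /ffunP/(_ ord0) | u w].
  by rewrite !ffunE => /pickle_inj.
split=> [euw i | differ].
  have uw : u != w by apply: contraTneq euw => ->; rewrite e_irr.
  rewrite !ffunE; case: i => -[|[|j]] lt_i /=; apply/eqP.
  - by rewrite (inj_eq pickle_inj).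
  - by have := pcol u w (in_setT u) (in_setT w) euw; case: (col u); case: (col w).
  - exact: pcs.
apply/negPn/negP => nuw.
have [uw | uw] := eqVneq u w; first by apply: (differ ord0); rewrite uw.
have [cuw | cuw] := eqVneq (col u) (col w).
  by apply: (differ (Ordinal (isT : 1 < d.+2))); rewrite !ffunE /= cuw.
have [j lt_jd eq_j] := sep u w (in_setT u) (in_setT w) uw nuw cuw.
by apply: (differ (Ordinal (lt_jd : j.+2 < d.+2))); rewrite !ffunE /= eq_j.
Qed.

Lemma separates_relabel S d col cs (f : bool -> bool) (g : nat -> nat -> nat) :
  injective f -> (forall i, injective (g i)) -> separates S d col cs ->
  separates S d (f \o col) (fun i => g i \o cs i).
Proof.
move=> fI gI [pcol pcs sep]; split=> [u w uS wS euw | i u w uS wS euw | u w uS wS uw nuw].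
- by rewrite /= (inj_eq fI) pcol.
- by rewrite /= (inj_eq (gI i)) pcs.
- by rewrite /= (inj_eq fI) => /(sep u w uS wS uw nuw) [i lt_id eq_i]; exists i; rewrite //= eq_i.
Qed.

Definition swapn (a b k : nat) : nat := if k == a then b else if k == b then a else k.

Lemma swapnK a b : involutive (swapn a b).
Proof.
move=> k; rewrite /swapn; case: (eqVneq k a) => [->|ka].
  by case: (eqVneq b a) => [-> //|_]; rewrite eqxx.
case: (eqVneq k b) => [->|kb]; first by rewrite eqxx.
by rewrite (negPf ka) (negPf kb).
Qed.

Lemma separable_pin S d v (b : bool) (k : nat -> nat) : separable S d ->
  exists col cs, [/\ separates S d col cs, col v = b & forall i, cs i v = k i].
Proof.
move=> [col [cs hs]].
exists (addb^~ (col v (+) b) \o col), (fun i => swapn (cs i v) (k i) \o cs i); split.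
- by apply: separates_relabel hs => [|i]; [exact: addIb | exact: inv_inj (swapnK _ _)].
- by rewrite /= addKb.
- by move=> i; rewrite /= /swapn eqxx.
Qed.

Lemma setU_cases (A B : {set T}) u w : u \in A :|: B -> w \in A :|: B ->
  [\/ u \in A /\ w \in A, u \in B /\ w \in B,
      u \in A :\: B /\ w \in B :\: A | u \in B :\: A /\ w \in A :\: B].
Proof.
rewrite !inE; case: (u \in A); case: (u \in B); case: (w \in A); case: (w \in B) => //= _ _;
  by [constructor 1 | constructor 2 | constructor 3 | constructor 4].
Qed.

Lemma edge_within A B : {in A :\: B & B :\: A, forall x y, ~~ e x y} ->
  {in A :|: B &, forall u w, e u w -> (u \in A /\ w \in A) \/ (u \in B /\ w \in B)}.
Proof.
move=> cross u w uS wS euw.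
case: (setU_cases uS wS) => [||[uA wB]|[uB wA]]; [by left|by right| |].
- by have := cross u w uA wB; rewrite euw.
- by have := cross w u wA uB; rewrite e_sym euw.
Qed.

(* Gluing two schemes that agree at the shared vertex v: on A and on B the
   colour and the coordinates 1, 2, ... follow the given schemes, and the new
   coordinate 0 is 2 on A n B, the colour on B \ A and the flipped colour on A \ B,
   so that it identifies the differently coloured pairs across the cut. *)
Section Glue.
Variables (A B : {set T}) (v : T) (d : nat).
Variables (colA colB : T -> bool) (csA csB : nat -> T -> nat).
Hypothesis shared_v : A :&: B \subset [set v].
Hypothesis no_cross : {in A :\: B & B :\: A, forall x y, ~~ e x y}.
Hypothesis sepA : separates A d colA csA.
Hypothesis sepB : separates B d colB csB.
Hypothesis agree_col : colA v = colB v.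
Hypothesis agree_cs : forall i, csA i v = csB i v.

Definition glue_col u := if u \in A then colA u else colB u.

Definition glue_cs i u : nat :=
  if i is j.+1 then (if u \in A then csA j u else csB j u)
  else if u \in A :&: B then 2 else glue_col u (+) (u \in A).

Lemma glue_onA u : u \in A -> glue_col u = colA u /\ forall j, glue_cs j.+1 u = csA j u.
Proof. by rewrite /glue_col /glue_cs => ->. Qed.

Lemma glue_shared u : u \in A :&: B -> u = v.
Proof. by move=> uAB; apply/set1P; apply: (subsetP shared_v). Qed.

(* On B the glued functions follow the scheme of B; at v this uses the agreement. *)
Lemma glue_onB u : u \in B -> glue_col u = colB u /\ forall j, glue_cs j.+1 u = csB j u.
Proof.
rewrite /glue_col /glue_cs; case: ifP => // uA uB.
by rewrite (glue_shared (u := u)) // inE uA.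
Qed.

Lemma glue_col_proper : {in A :|: B &, forall u w, e u w -> glue_col u != glue_col w}.
Proof.
have [[pA _ _] [pB _ _]] := (sepA, sepB).
move=> u w uS wS euw; case: (edge_within no_cross uS wS euw) => [[uA wA]|[uB wB]].
  by rewrite (glue_onA uA).1 (glue_onA wA).1 pA.
by rewrite (glue_onB uB).1 (glue_onB wB).1 pB.
Qed.

(* The cut coordinate is proper: an edge meets the shared vertex at most once,
   and otherwise both ends lie on the same side, where it is the (possibly
   flipped) proper colouring. *)
Lemma glue_side_proper : {in A :|: B &, forall u w, e u w -> glue_cs 0 u != glue_cs 0 w}.
Proof.
move=> u w uS wS euw; have cuw := glue_col_proper uS wS euw.
have [uAB | uAB] := boolP (u \in A :&: B); have [wAB | wAB] := boolP (w \in A :&: B).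
- by move: euw; rewrite (glue_shared uAB) (glue_shared wAB) e_irr.
- by rewrite /glue_cs uAB (negPf wAB); case: (_ (+) _).
- by rewrite /glue_cs wAB (negPf uAB); case: (_ (+) _).
have same_A : (u \in A) = (w \in A).
  move: uAB wAB; rewrite !inE.
  by case: (edge_within no_cross uS wS euw) => -[-> ->] //=; case: (_ \in A); case: (_ \in A).
rewrite /glue_cs (negPf uAB) (negPf wAB) same_A; move: cuw.
by case: (glue_col u); case: (glue_col w); case: (w \in A).
Qed.

Lemma glue_cs_proper i : {in A :|: B &, forall u w, e u w -> glue_cs i u != glue_cs i w}.
Proof.
have [[_ qA _] [_ qB _]] := (sepA, sepB).
case: i => [|j]; first exact: glue_side_proper.
move=> u w uS wS euw; case: (edge_within no_cross uS wS euw) => [[uA wA]|[uB wB]].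
  by rewrite (glue_onA uA).2 (glue_onA wA).2 qA.
by rewrite (glue_onB uB).2 (glue_onB wB).2 qB.
Qed.

Lemma glue_separates : separates (A :|: B) d.+1 glue_col glue_cs.
Proof.
have [[_ _ sA] [_ _ sB]] := (sepA, sepB).
split; [exact: glue_col_proper | exact: glue_cs_proper |].
move=> u w uS wS uw nuw; case: (setU_cases uS wS) => [[uA wA]|[uB wB]|[]|[]].
- rewrite (glue_onA uA).1 (glue_onA wA).1 => /(sA u w uA wA uw nuw) [i lt_id eq_i].
  by exists i.+1; rewrite // (glue_onA uA).2 (glue_onA wA).2.
- rewrite (glue_onB uB).1 (glue_onB wB).1 => /(sB u w uB wB uw nuw) [i lt_id eq_i].
  by exists i.+1; rewrite // (glue_onB uB).2 (glue_onB wB).2.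
- rewrite !inE => /andP[/negPf uB uA] /andP[/negPf wA wB] cuw; exists 0 => //.
  by move: cuw; rewrite /glue_cs !inE uA uB wA wB /=; case: (glue_col u); case: (glue_col w).
- rewrite !inE => /andP[/negPf uA uB] /andP[/negPf wB wA] cuw; exists 0 => //.
  by move: cuw; rewrite /glue_cs !inE uA uB wA wB /=; case: (glue_col u); case: (glue_col w).
Qed.

End Glue.

Lemma glue A B v d :
  A :&: B \subset [set v] -> {in A :\: B & B :\: A, forall x y, ~~ e x y} ->
  separable A d -> separable B d -> separable (A :|: B) d.+1.
Proof.
move=> sAB cross [colA [csA hA]] hB.
have [colB [csB [hB' agree_col agree_cs]]] := separable_pin v (colA v) (csA^~ v) hB.
exists (glue_col A colA colB), (glue_cs A B colA colB csA csB).
exact: glue_separates sAB cross hA hB' (esym agree_col) (fun i => esym (agree_cs i)).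
Qed.

Lemma separable_card2 S : #|S| <= 2 -> separable S 0.
Proof.
move=> S2; pose edge_in (p : T * T) := [&& p.1 \in S, p.2 \in S & e p.1 p.2].
have pickle_proper : {in S &, forall u w, e u w -> pickle u != pickle w}.
  move=> u w _ _ euw; rewrite (inj_eq (pcan_inj (@pickleK T))).
  by apply: contraTneq euw => ->; rewrite e_irr.
case: (pickP edge_in) => [[a b] /and3P[/= aS bS eab] | no_edge].
{ have ab : a != b by apply: contraTneq eab => ->; rewrite e_irr.
  have S_ab : S = [set a; b].
    apply/esym/eqP; rewrite eqEcard cards2 ab (leq_trans S2) // andbT.
    by apply/subsetP => z; rewrite !inE => /orP[] /eqP ->.
  have ba : (b == a) = false by rewrite eq_sym (negPf ab).
  exists (fun u => u == a), (fun _ => pickle); split; [|by move=> i; exact: pickle_proper|].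
  all: rewrite S_ab => u w /set2P[]-> /set2P[]->.
  all: by rewrite ?e_irr ?ba ?eqxx ?eab ?(e_sym b) ?eab. }
exists (fun _ => false), (fun _ => pickle); split; [|by move=> i; exact: pickle_proper|by []].
by move=> u w uS wS euw; have := no_edge (u, w); rewrite /edge_in /= uS wS euw.
Qed.

(* Components.  comp U x is the connected component of x in the subgraph
   induced on U, and closed_in U G says that G is a union of such components. *)
Definition induced (U : {set T}) : rel T := fun x y => [&& x \in U, y \in U & e x y].

Definition comp (U : {set T}) (x : T) : {set T} := [set y in U | connect (induced U) x y].

Definition closed_in (U G : {set T}) : bool :=
  (G \subset U) && [forall a in G, forall b in U, e a b ==> (b \in G)].

Lemma closed_inP U G :
  reflect (G \subset U /\ {in G & U, forall a b, e a b -> b \in G}) (closed_in U G).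
Proof.
apply: (iffP andP) => -[sGU cl]; split=> //.
  by move=> a b aG bU; have /forall_inP/(_ b bU)/implyP := forall_inP cl a aG.
by apply/forall_inP => a aG; apply/forall_inP => b bU; apply/implyP; apply: cl.
Qed.

Lemma induced_sym U : symmetric (induced U).
Proof. by move=> x y; rewrite /induced e_sym; case: (x \in U); case: (y \in U). Qed.

Lemma mem_comp U x : x \in U -> x \in comp U x.
Proof. by move=> xU; rewrite inE xU connect0. Qed.

Lemma comp_closed U x : closed_in U (comp U x).
Proof.
apply/closed_inP; split=> [|a b]; first by apply/subsetP => y; rewrite inE => /andP[].
rewrite !inE => /andP[aU xa] bU eab; rewrite bU.
by apply: connect_trans xa (connect1 _); rewrite /induced aU bU.
Qed.

Lemma comp_sub U G x : closed_in U G -> x \in G -> comp U x \subset G.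
Proof.
move=> /closed_inP[sGU cl] xG; apply/subsetP => y; rewrite inE => /andP[yU].
case/connectP => p; elim: p x xG => [x xG _ -> //|z p IH x xG] /=.
by case/andP=> /and3P[xU zU exz] zp yp; apply: IH (cl x z xG zU exz) zp yp.
Qed.

Lemma closed_in_setD U G : closed_in U G -> closed_in U (U :\: G).
Proof.
move=> /closed_inP[sGU cl]; apply/closed_inP; split=> [|a b]; first exact: subsetDl.
rewrite !inE => /andP[aG aU] bU eab; rewrite bU andbT.
by apply: contra aG => bG; apply: cl bG aU _; rewrite e_sym.
Qed.

Lemma closed_inU U G1 G2 : closed_in U G1 -> closed_in U G2 -> closed_in U (G1 :|: G2).
Proof.
move=> /closed_inP[s1 c1] /closed_inP[s2 c2]; apply/closed_inP.
split=> [|a b]; first by rewrite subUset s1 s2.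
by rewrite !inE => /orP[] aG bU eab; [rewrite (c1 a b) | rewrite (c2 a b) ?orbT].
Qed.

Lemma closed_in_sub U U' G : U' \subset U -> G \subset U' -> closed_in U G -> closed_in U' G.
Proof.
move=> sU sG /closed_inP[_ cl]; apply/closed_inP; split=> // a b aG bU'.
exact: cl aG (subsetP sU b bU').
Qed.

Lemma closed_in_setD1 S v G : closed_in (S :\ v) G -> G \subset S /\ v \notin G.
Proof.
move=> /closed_inP[GSv _]; split; first exact: subset_trans GSv (subsetDl _ _).
by apply/negP => /(subsetP GSv); rewrite in_setD1 eqxx.
Qed.

Lemma split_at S G v d : v \in S -> closed_in (S :\ v) G ->
  separable (v |: G) d -> separable (S :\: G) d -> separable S d.+1.
Proof.
move=> vS G_closed sepA sepB; have [GS vG] := closed_in_setD1 G_closed.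
have /closed_inP[_ G_edges] := G_closed.
have -> : S = (v |: G) :|: (S :\: G).
  apply/setP => z; rewrite !inE; have [->|_] := eqVneq z v; first by rewrite vS.
  by case: (boolP (z \in G)) => [/(subsetP GS) ->|].
apply: (glue (v := v)) sepA sepB.
  apply/subsetP => z; rewrite !inE => /andP[zvG /andP[/negPf zG _]].
  by rewrite zG orbF in zvG.
move=> x y; rewrite !inE negb_or => /andP[xGS xvG] /and3P[/andP[yv _] yG yS].
have xG : x \in G by case/orP: xvG => [/eqP xv | //]; rewrite xv (negPf vG) vS in xGS.
by apply: contra yG => exy; apply: G_edges xG _ exy; rewrite in_setD1 yv yS.
Qed.

Lemma induced_path U x p : path (induced U) x p -> path e x p /\ {subset p <= U}.
Proof.
elim: p x => [|y p IH] x //= /andP[/and3P[_ yU exy] /IH[ep sp]]; rewrite exy ep.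
by split=> // z; rewrite inE => /orP[/eqP-> //|/sp].
Qed.

Hypothesis e_acyclic : ~ has_cycle e.

(* In a forest, a vertex outside U has at most one neighbour in each component
   of U: two neighbours joined inside U would close a cycle. *)
Lemma comp_unique_neighbour U v y : v \notin U ->
  {in comp U y &, forall p w, e v p -> e v w -> p = w}.
Proof.
move=> vU p w; rewrite !inE => /andP[pU yp] /andP[wU yw] evp evw.
have [// | pw] := eqVneq p w; exfalso.
have /connectP[q wq p_last] : connect (induced U) w p.
  by apply: connect_trans yp; rewrite (sym_connect_sym (induced_sym U)).
move: p_last; case: (shortenP wq) => {wq}q wq uniq_q _ p_last.
have [path_q q_U] := induced_path wq.
have vq : v \notin w :: q.
  rewrite inE negb_or; apply/andP; split.
    by apply: contraNneq vU => ->.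
  by apply: contra vU => /q_U.
apply: e_acyclic; exists v, (w :: q); split.
- by case: q {wq uniq_q path_q q_U vq} p_last => [/= pw'|]; [rewrite pw' eqxx in pw|].
- by rewrite cons_uniq vq uniq_q.
- by rewrite /= evw path_q.
- by rewrite /= -p_last e_sym.
Qed.

Lemma comp_attach S v y : y \in S :\ v ->
  exists2 w, w \in comp (S :\ v) y & {in comp (S :\ v) y, forall p, p != w -> ~~ e v p}.
Proof.
move=> yS; have vSv : v \notin S :\ v by rewrite !inE eqxx.
case: (pickP [pred p in comp (S :\ v) y | e v p]) => [w /andP[wC evw] | none].
  exists w => // p pC; apply: contraNN => evp; apply/eqP.
  exact: (comp_unique_neighbour vSv pC wC evp evw).
exists y; first exact: mem_comp.
by move=> p pC _; apply/negP => evp; have := none p; rewrite /= pC evp.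
Qed.

Definition max_comp S v : nat := \max_(y in S :\ v) #|comp (S :\ v) y|.

(* If a component C of S \ v holds more than half of S, moving from v to its
   attachment vertex w makes all components smaller than C: those inside C
   lose w, and the others lie in S \ C. *)
Lemma max_comp_attach S v y w : y \in S :\ v -> w \in comp (S :\ v) y ->
  {in comp (S :\ v) y, forall p, p != w -> ~~ e v p} ->
  #|S| < (#|comp (S :\ v) y|).*2 -> max_comp S w < #|comp (S :\ v) y|.
Proof.
set C := comp (S :\ v) y => yS wC attach big.
have /closed_inP[CSv C_closed] : closed_in (S :\ v) C by apply: comp_closed.
have CS : C \subset S by apply: subset_trans CSv (subsetDl _ _).
have D_closed : closed_in (S :\ w) (C :\ w).
  apply/closed_inP; split=> [|a b].
    by apply/subsetP => z; rewrite !in_setD1 => /andP[-> /(subsetP CS) ->].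
  rewrite !in_setD1 => /andP[aw aC] /andP[bw bS] eab; rewrite bw.
  have [bv | bv] := eqVneq b v; last by apply: C_closed aC _ eab; rewrite in_setD1 bv.
  by move: eab; rewrite bv e_sym => eva; have := attach a aC aw; rewrite eva.
have card_D : #|C :\ w| < #|C| by rewrite (cardsD1 w C) wC.
have small z : z \in S :\ w -> #|comp (S :\ w) z| < #|C|.
  move=> zS; have [zD | zD] := boolP (z \in C :\ w).
    exact: leq_ltn_trans (subset_leq_card (comp_sub D_closed zD)) card_D.
  have outside : comp (S :\ w) z \subset S :\: C.
    apply: subset_trans (comp_sub (closed_in_setD D_closed) _) _; first by rewrite inE zD.
    by apply/subsetP => t; rewrite !inE => /andP[/nandP[/negPn -> //|-> //] /andP[]].
  apply: leq_ltn_trans (subset_leq_card outside) _.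
  by rewrite cardsD (setIidPr CS); move: big; rewrite -addnn; lia.
have C_pos : 0 < #|C| by apply/card_gt0P; exists w.
rewrite /max_comp -(prednK C_pos) ltnS; apply/bigmax_leqP => z /small; lia.
Qed.

(* A vertex minimising max_comp is a centroid. *)
Lemma centroid S x0 : x0 \in S ->
  exists2 v, v \in S & {in S :\ v, forall y, (#|comp (S :\ v) y|).*2 <= #|S|}.
Proof.
move=> x0S; case: (arg_minnP (max_comp S) x0S) => v vS v_min.
exists v => // y yS; rewrite leqNgt; apply/negP => big.
have [w wC attach] := comp_attach yS.
have /closed_inP[CSv _] := comp_closed (S :\ v) y.
have wS : w \in S by move: (subsetP CSv w wC); rewrite in_setD1 => /andP[].
have := v_min w wS; have := max_comp_attach yS wC attach big.
have : #|comp (S :\ v) y| <= max_comp S v by apply: leq_bigmax_cond.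
lia.
Qed.

(* If all components of U have at most b vertices and |U| <= a + b + 1, then
   U splits into unions of components of sizes at most a, b and b: take two
   disjoint unions G1, G2 of sizes <= a, b with |G1| + |G2| maximal; if the
   rest were larger than b then |G1 u G2| <= a and (G1 u G2, X) for a
   remaining component X would be a better pair. *)
Lemma three_bins U (a b : nat) :
  {in U, forall y, #|comp U y| <= b} -> #|U| <= a + b + 1 ->
  exists G1 G2, [/\ closed_in U G1, closed_in U G2, G1 :&: G2 = set0,
                    #|G1| <= a & #|G2| <= b] /\ #|U| <= #|G1 :|: G2| + b.
Proof.
move=> comp_small U_small.
pose fits (P : {set T} * {set T}) :=
  [&& closed_in U P.1, closed_in U P.2, P.1 :&: P.2 == set0, #|P.1| <= a & #|P.2| <= b].
have closed0 : closed_in U set0.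
  by apply/closed_inP; split=> [|?]; [exact: sub0set | rewrite inE].
have fits0 : fits (set0, set0) by rewrite /fits /= closed0 set0I eqxx !cards0.
case: (arg_maxnP (fun P : {set T} * {set T} => #|P.1| + #|P.2|) fits0) => -[G1 G2].
move=> /and5P[/= c1 c2 /eqP d12 s1 s2] G_max.
have card_G : #|G1 :|: G2| = #|G1| + #|G2| by rewrite cardsU d12 cards0 subn0.
exists G1, G2; split=> //; rewrite leqNgt; apply/negP => rest_big.
have G_closed := closed_inU c1 c2.
have /closed_inP[GU _] := G_closed.
have /set0Pn[x xR] : U :\: (G1 :|: G2) != set0.
  by rewrite -card_gt0 cardsD (setIidPr GU); move: rest_big; rewrite card_G; lia.
have R_closed := closed_in_setD G_closed.
have XR : comp U x \subset U :\: (G1 :|: G2) by apply: comp_sub R_closed xR.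
have xU : x \in U by move: xR; rewrite inE => /andP[].
have X_pos : 0 < #|comp U x| by apply/card_gt0P; exists x; apply: mem_comp.
have disj : (G1 :|: G2) :&: comp U x = set0.
  apply/setP => z; rewrite in_setI in_set0; apply/negP => /andP[zG /(subsetP XR)].
  by rewrite in_setD zG.
have : fits (G1 :|: G2, comp U x).
  rewrite /fits /= G_closed comp_closed disj eqxx comp_small // andbT card_G.
  by move: rest_big U_small; rewrite card_G; lia.
by move/G_max => /=; rewrite card_G; lia.
Qed.

(* The size bounds of the induction: fib k is the (k+2)-th Fibonacci number. *)
Fixpoint fib (k : nat) : nat :=
  match k with 0 => 1 | 1 => 2 | (j.+1 as k1).+1 => fib k1 + fib j end.

Lemma fibSS k : fib k.+2 = fib k.+1 + fib k.
Proof. by []. Qed.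

Lemma fib_gt0 k : 0 < fib k.
Proof. by elim/ltn_ind: k => -[|[|k]] IH //=; rewrite addn_gt0 (IH k.+1). Qed.

Lemma fib_lt k : fib k < fib k.+1.
Proof. by case: k => [|k] //=; rewrite -addn1 leq_add2l fib_gt0. Qed.

Lemma ltn_fib k : k < fib k.
Proof. by elim: k => [|k IH] //; apply: leq_ltn_trans IH (fib_lt k). Qed.

Lemma split_heavy d S v y :
  (forall S', #|S'| <= fib d.+1 -> separable S' d) ->
  v \in S -> y \in S :\ v -> (#|comp (S :\ v) y|).*2 <= #|S| ->
  fib d <= #|comp (S :\ v) y| -> #|S| <= fib d.+2 -> separable S d.+1.
Proof.
move=> IH vS yS half heavy S_small.
have C_closed := comp_closed (S :\ v) y; have [CS vC] := closed_in_setD1 C_closed.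
have lt_fib := fib_lt d; rewrite fibSS in S_small.
apply: split_at vS C_closed _ _; apply: IH.
  by rewrite cardsU1 vC add1n; move: half; rewrite -addnn; lia.
by rewrite cardsD (setIidPr CS); lia.
Qed.

(* All components of S \ v below fib (d+1): group them into G1, G2, G3, cut
   off G1 at v, then split the rest at v again into G2 and G3. *)
Lemma split_light d S v :
  (forall S', #|S'| <= fib d.+2 -> separable S' d.+1) ->
  (forall S', #|S'| <= fib d.+1 -> separable S' d) ->
  v \in S -> {in S :\ v, forall y, #|comp (S :\ v) y| < fib d.+1} ->
  #|S| <= fib d.+3 -> separable S d.+2.
Proof.
move=> IH1 IH0 vS light S_small.
have card_Sv : #|S| = #|S :\ v|.+1 by rewrite (cardsD1 v S) vS.
have pos1 := fib_gt0 d.+1; have pos2 := fib_gt0 d.+2; rewrite fibSS in S_small.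
have [G1 [G2 [[c1 c2 d12 s1 s2] rest]]] :
    exists G1 G2, [/\ closed_in (S :\ v) G1, closed_in (S :\ v) G2, G1 :&: G2 = set0,
      #|G1| <= (fib d.+2).-1 & #|G2| <= (fib d.+1).-1] /\
      #|S :\ v| <= #|G1 :|: G2| + (fib d.+1).-1.
  by apply: three_bins => [y /light|]; lia.
have [G1S vG1] := closed_in_setD1 c1; have [G2S vG2] := closed_in_setD1 c2.
apply: (split_at vS c1); first by apply: IH1; rewrite cardsU1 vG1 add1n; lia.
have vSG1 : v \in S :\: G1 by rewrite in_setD vG1 vS.
have c2' : closed_in ((S :\: G1) :\ v) G2.
  apply: closed_in_sub c2; first by apply: setSD; apply: subsetDl.
  apply/subsetP => z zG2; rewrite in_setD1 in_setD (subsetP G2S z zG2) andbT.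
  apply/andP; split; first by apply: contraNneq vG2 => <-.
  by apply/negP => zG1; move/setP/(_ z): d12; rewrite !inE zG1 zG2.
apply: (split_at vSG1 c2'); apply: IH0; first by rewrite cardsU1 vG2 add1n; lia.
rewrite setDDl cardsD (setIidPr _) ?subUset ?G1S ?G2S //.
by move: rest; lia.
Qed.

Theorem separable_fib d S : #|S| <= fib d.+1 -> separable S d.
Proof.
elim/ltn_ind: d S => -[|d] IH S S_small; first exact: separable_card2.
have [S_smaller | S_large] := leqP #|S| (fib d.+1).
  by apply: separable_mono (IH d _ S S_smaller).
have [x xS] : exists x, x \in S.
  by apply/set0Pn; rewrite -card_gt0; apply: leq_ltn_trans S_large.
have [v vS v_centroid] := centroid xS.
have [/exists_inP[y yS heavy] | /exists_inP light] :=
  boolP [exists y in S :\ v, fib d <= #|comp (S :\ v) y|].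
  exact: split_heavy (IH d _) vS yS (v_centroid y yS) heavy S_small.
case: d IH S_small S_large light => [|d] IH S_small S_large light.
  have [y yS] : exists y, y \in S :\ v.
    apply/set0Pn; rewrite -card_gt0; move: S_large.
    by rewrite (cardsD1 v S) vS add1n ltnS; apply: leq_trans.
  by case: light; exists y => //; apply/card_gt0P; exists y; apply: mem_comp.
apply: split_light (IH d.+1 _) (IH d _) vS _ S_small => // y yS.
by rewrite ltnNge; apply/negP => heavy; case: light; exists y.
Qed.

End Separation.

(* The numerical bound: 1.618 is below the golden ratio, so fib k >= 1.618^k,
   and log2 1.618 >= 59/85 > 1/1.441. *)
Section LogBound.
Local Open Scope R_scope.

Definition golden_lb : R := 1618 / 1000.

Lemma ln_le x y : 0 < x -> x <= y -> ln x <= ln y.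
Proof.
move=> x_pos /Rle_lt_or_eq_dec[lt_xy | ->]; last exact: Rle_refl.
exact/Rlt_le/ln_increasing.
Qed.

Lemma log2_ge0 x : 1 <= x -> 0 <= log2 x.
Proof.
move=> x_ge1; apply: Rle_mult_inv_pos; last by have := ln_lt_2; lra.
by rewrite -ln_1; apply: ln_le; lra.
Qed.

Lemma fib_lower k : golden_lb ^ k <= INR (fib k).
Proof.
rewrite /golden_lb; elim/ltn_ind: k => -[|[|k]] IH /=; try lra.
rewrite plus_INR; have IH1 := IH k.+1 (ltnSn _); have IH0 := IH k (ltnW (ltnSn _)).
have q_pos : 0 <= (1618 / 1000) ^ k by apply: pow_le; lra.
rewrite /= in IH1; nra.
Qed.

Lemma golden_lb_log : 59 * ln 2 <= 85 * ln golden_lb.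
Proof.
have powers : (2 ^ Z.of_nat 59 * 1000 ^ Z.of_nat 85 <= 1618 ^ Z.of_nat 85)%Z.
  by vm_compute; discriminate.
move/IZR_le: powers; rewrite mult_IZR -!pow_IZR => powers.
have scale : golden_lb ^ 85 * 1000 ^ 85 = 1618 ^ 85.
  by rewrite -Rpow_mult_distr /golden_lb; f_equal; field.
have {}powers : 2 ^ 59 <= golden_lb ^ 85.
  by apply: (Rmult_le_reg_r (1000 ^ 85)); [apply: pow_lt; lra | rewrite scale].
have := ln_le (pow_lt 2 59 ltac:(lra)) powers.
by rewrite !ln_pow ?INR_IZR_INZ //; rewrite /golden_lb; lra.
Qed.

Lemma fib_index_log d n : (fib d < n)%nat -> INR d <= 1441 / 1000 * log2 (INR n).
Proof.
move=> /ltnW /leP /le_INR fib_n.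
have ln2_pos : 0 < ln 2 by have := ln_lt_2; lra.
have g_pos : 0 < golden_lb by rewrite /golden_lb; lra.
have n_ge1 : 1 <= INR n.
  by apply: Rle_trans fib_n; apply: (le_INR 1); apply/leP; exact: fib_gt0.
have d_ln : INR d * ln golden_lb <= ln (INR n).
  by rewrite -ln_pow //; apply: ln_le; [apply: pow_lt | apply: Rle_trans (fib_lower d) _].
have d_g : INR d * (59 * ln 2) <= INR d * (85 * ln golden_lb).
  by apply: Rmult_le_compat_l; [exact: pos_INR | exact: golden_lb_log].
have ln_n : ln (INR n) = log2 (INR n) * ln 2 by rewrite /log2; field; lra.
have := log2_ge0 n_ge1; nra.
Qed.

Lemma least_fib_index n : (1 <= n)%nat ->
  exists d, (n <= fib d.+1)%nat /\ INR d <= 1441 / 1000 * log2 (INR n).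
Proof.
move=> n_pos; have ex_d : exists d, (n <= fib d.+1)%nat.
  by exists n; apply/ltnW/(ltn_trans (ltn_fib n))/fib_lt.
case: (ex_minnP ex_d) => -[|d] n_fib d_min; [exists 0%nat | exists d.+1]; split=> //.
  have n_ge1 : 1 <= INR n by apply: (le_INR 1); apply/leP.
  by have := log2_ge0 n_ge1; rewrite /=; lra.
apply: fib_index_log; rewrite ltnNge; apply/negP => /d_min; lia.
Qed.

End LogBound.

Theorem theorem1 (T : finType) (e : rel T) :
  forest e -> 1 <= #|T| ->
  exists l : nat, has_encoding e l /\
    (INR l <= 1441 / 1000 * log2 (INR #|T|) + 3)%R.
Proof.
move=> [[e_sym e_irr] e_acyclic] T_pos.
have [d [T_small d_log]] := least_fib_index T_pos.
exists d.+2; split.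
  apply: (encoding_of_separable e_irr).
  by apply: (separable_fib e_sym e_irr e_acyclic); rewrite cardsT.
by rewrite !S_INR; lra.
Qed.
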